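(* Let $M\in\Gamma$ be a monitor, $N$ a malicious node, $C$ a malicious node colluding with $N$, and $P$ an honest outbound peer of $C$ that is not connected to $N$. If $M$ executes $PeeV(N)$, $N$ forwards the marker it receives from $M$ to $C$, and $C$ forwards it to $P$, then when $PeeV(N)$ ends, $P\notin L_N^M$.
   Context: The network is a directed graph $G=(V,E)$ of nodes; $(X,Y)\in E$ means $X$ has an outbound connection to $Y$, so $Y$ is an outbound peer of $X$ and $X$ is an inbound peer of $Y$. $\Gamma$ is a set of legitimate monitors, each connected to every node. A marker is a triple $[N,M,r]$ (target, monitor, random value). $PeeV(N)$, run by $M$: start with empty $L_N^M$; draw random $r$; send $[N,M,r]$ to $N$; until a timeout, whenever a marker equal to $[N,M,r]$ is received from a node $P$, add $P$ to $L_N^M$; then output $L_N^M$. An honest node $X$ processes every received marker with $HandleMarker(pfrom,[N,M,r])$: if $pfrom=M\in\Gamma$, forward the marker to all outbound peers of $X$; if $pfrom=N$ and $N$ is an inbound peer of $X$, send the marker to $M$; otherwise do nothing. Malicious nodes may deviate arbitrarily and may cooperate with each other. *)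

From Stdlib Require Import List.
Import ListNotations.
Set Implicit Arguments.

Section Model.
Variables (V : Type)
          (G : Type)  (* the legitimate monitors Gamma *)
          (Rnd : Type).

Inductive party : Type := Nd (x : V) | Mon (m : G).

Record marker : Type := Marker { mk_target : V; mk_monitor : G; mk_rand : Rnd }.

(* A message: the (authenticated) connection endpoint it comes from, its
   receiver, and the marker it carries. *)
Record msg : Type := Msg { src : party; dst : party; payload : marker }.

(* Who can send to whom: nodes along edges of E (either direction, a
   connection is bidirectional), monitors are connected to every node. *)
Definition connected (E : V -> V -> Prop) (a b : party) : Prop :=
  match a, b with
  | Nd x, Nd y => E x y \/ E y x
  | Mon _, Nd _ | Nd _, Mon _ => True
  | Mon _, Mon _ => False
  end.

(* HandleMarker(pfrom, [N,M,r]) executed by honest node X causes X to send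
   the marker to [dest]. *)
Definition handle_sends (E : V -> V -> Prop) (X : V) (pfrom : party)
    (m : marker) (dest : party) : Prop :=
  (pfrom = Mon (mk_monitor m) /\ exists Y, E X Y /\ dest = Nd Y)
  \/ (pfrom = Nd (mk_target m) /\ E (mk_target m) X
      /\ dest = Mon (mk_monitor m)).

(* [tr] is (in chronological order) the list of all messages carrying the
   marker [N,M,r] exchanged during the execution of PeeV(N) by M, until the
   timeout.  Malicious nodes may send arbitrary messages (over their
   connections); honest nodes only send what HandleMarker dictates in
   response to a previously received marker; legitimate monitors only send
   as prescribed by PeeV (M sends [N,M,r] to N). *)
Definition valid_run (E : V -> V -> Prop) (honest : V -> Prop)
    (N : V) (M : G) (r : Rnd) (tr : list msg) : Prop :=
  (forall e, In e tr -> payload e = Marker N M r)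
  /\ (forall e, In e tr -> connected E (src e) (dst e))
  /\ (forall e m, In e tr -> src e = Mon m -> m = M /\ dst e = Nd N)
  /\ (forall i e X, nth_error tr i = Some e -> src e = Nd X -> honest X ->
        exists j e', j < i /\ nth_error tr j = Some e' /\ dst e' = Nd X
          /\ payload e' = payload e
          /\ handle_sends E X (src e') (payload e') (dst e)).

(* The output list L_N^M of PeeV(N): the parties from which M received a
   marker equal to [N,M,r]. *)
Definition PeeV_list (N : V) (M : G) (r : Rnd) (tr : list msg) (P : party)
  : Prop :=
  exists e, In e tr /\ src e = P /\ dst e = Mon M /\ payload e = Marker N M r.

End Model.

(* An honest node reports a marker [N,M,r] to M only when it received it
   directly from N over an inbound connection; otherwise HandleMarker either
   forwards it to outbound peers (never to a monitor) or drops it.  Hence an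
   honest node that is not an outbound peer of N never enters L_N^M, whatever
   the malicious nodes do: the relay of the marker through C is irrelevant. *)
From Stdlib Require Import List.

Set Implicit Arguments.

Lemma handle_sends_Mon_inv (V G Rnd : Type) (E : V -> V -> Prop) (X : V)
    (pfrom : party V G) (m : marker V G Rnd) (M' : G) :
  handle_sends E X pfrom m (Mon V M') ->
  pfrom = Nd G (mk_target m) /\ E (mk_target m) X.
Proof.
  intros [[_ [Y [_ HY]]] | [Hfrom [HE _]]].
  - discriminate HY.
  - split; assumption.
Qed.

Lemma PeeV_list_honest_inbound (V G Rnd : Type) (E : V -> V -> Prop)
    (honest : V -> Prop) (N : V) (M : G) (r : Rnd) (tr : list (msg V G Rnd))
    (X : V) :
  valid_run E honest N M r tr -> honest X ->
  PeeV_list N M r tr (Nd G X) -> E N X.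
Proof.
  intros [_ [_ [_ Hhonest]]] hX [e [Hin [Hsrc [Hdst Hpay]]]].
  destruct (In_nth_error _ _ Hin) as [i Hi].
  destruct (Hhonest i e X Hi Hsrc hX) as [j [e' [_ [_ [_ [Hpay' Hsend]]]]]].
  rewrite Hdst in Hsend.
  destruct (handle_sends_Mon_inv Hsend) as [_ HE].
  rewrite Hpay', Hpay in HE.
  exact HE.
Qed.

Theorem lemma2 (V G Rnd : Type) (E : V -> V -> Prop) (honest : V -> Prop)
    (M : G) (N C P : V) (r : Rnd) (tr : list (msg V G Rnd)) :
  ~ honest N -> ~ honest C -> N <> C -> honest P ->
  E C P -> ~ E N P -> ~ E P N ->
  valid_run E honest N M r tr ->
  (exists i j k,
     i < j /\ j < k /\
     nth_error tr i = Some (Msg (Mon V M) (Nd G N) (Marker N M r)) /\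
     nth_error tr j = Some (Msg (Nd G N) (Nd G C) (Marker N M r)) /\
     nth_error tr k = Some (Msg (Nd G C) (Nd G P) (Marker N M r))) ->
  ~ PeeV_list N M r tr (Nd G P).
Proof.
  intros _ _ _ hP _ nNP _ Hrun _ HP.
  exact (nNP (PeeV_list_honest_inbound Hrun hP HP)).
Qed.
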